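(* Let $\alpha,\beta$ be real numbers with $\alpha \neq 0$, $\beta \neq 0$, $\beta \neq 1$ and $\alpha \neq \beta$. Let $g(x)=\alpha x(1-x)$ and $h(x)=\beta x(1-x)$, and let $x_\alpha=\frac{\alpha-1}{\alpha}$ and $x_\beta=\frac{\beta-1}{\beta}$ be their nontrivial fixed points. Then the two-point set $\Lambda=\{x_\alpha,x_\beta\}$ is a 2-point toss-and-catch, i.e. $h(x_\alpha)=x_\beta$, $g(x_\beta)=x_\alpha$ and $\Lambda=g(\Lambda)\cup h(\Lambda)$, if and only if $$\alpha=\frac{\beta}{\beta-1}.$$
   Context: For $\gamma\in\mathbb{R}$ let $f_\gamma(x)=\gamma x(1-x)$ denote the logistic map. The logistic IFS is the pair $\{g,h\}=\{f_\alpha,f_\beta\}$, where at each time step $g$ is applied with probability $p\in(0,1)$ and $h$ with probability $1-p$, independently. An invariant set of the IFS is a set $\Lambda$ with $\Lambda=g(\Lambda)\cup h(\Lambda)$; a finite invariant set with $n$ points is called an $n$-point toss-and-catch. In the 2-point toss-and-catch considered here, the fixed point of $g$ is sent by $h$ to the fixed point of $h$ and vice versa. *)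

From Stdlib Require Import Reals.
Open Scope R_scope.

Definition logistic (gamma x : R) : R := gamma * x * (1 - x).

Definition image (f : R -> R) (A : R -> Prop) : R -> Prop :=
  fun y => exists x, A x /\ y = f x.

Definition setU (A B : R -> Prop) : R -> Prop := fun y => A y \/ B y.

Definition set_eq (A B : R -> Prop) : Prop := forall y, A y <-> B y.

Definition pair_set (a b : R) : R -> Prop := fun y => y = a \/ y = b.

Definition IFS_invariant (g h : R -> R) (L : R -> Prop) : Prop :=
  set_eq L (setU (image g L) (image h L)).

(** The nontrivial fixed point [x_g = (g-1)/g] of [f_g] is sent by [f_d] to
    [d (g-1)/g^2], and clearing denominators gives
    [g^2 d (f_d x_g - x_d) = (g - d)(g + d - g d)].  For [g <> d] the
    condition [f_d x_g = x_d] is therefore the symmetric relation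
    [g + d = g d], so [h x_a = x_b] and [g x_b = x_a] hold together, and then
    [{x_a, x_b}] is invariant because each point is also fixed by its own map. *)
From Stdlib Require Import Reals Lra.
Open Scope R_scope.

Definition logistic_fixed_point (gamma : R) : R := (gamma - 1) / gamma.

Lemma logistic_fixed_pointP (gamma : R) :
  gamma <> 0 -> logistic gamma (logistic_fixed_point gamma) = logistic_fixed_point gamma.
Proof.
  intros hg; unfold logistic, logistic_fixed_point; field; exact hg.
Qed.

Lemma logistic_image_fixed_point_defect (gamma delta : R) :
  gamma <> 0 -> delta <> 0 ->
  gamma ^ 2 * delta
    * (logistic delta (logistic_fixed_point gamma) - logistic_fixed_point delta)
  = (gamma - delta) * (gamma + delta - gamma * delta).
Proof.
  intros hg hd; unfold logistic, logistic_fixed_point; field; split; assumption.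
Qed.

Lemma logistic_maps_fixed_point_iff (gamma delta : R) :
  gamma <> 0 -> delta <> 0 -> gamma <> delta ->
  logistic delta (logistic_fixed_point gamma) = logistic_fixed_point delta
  <-> gamma + delta = gamma * delta.
Proof.
  intros hg hd hgd.
  pose proof (logistic_image_fixed_point_defect gamma delta hg hd) as defect.
  split; intros H.
  - rewrite H, Rminus_diag, Rmult_0_r in defect.
    symmetry in defect; apply Rmult_integral in defect.
    destruct defect; lra.
  - assert (hscale : gamma ^ 2 * delta <> 0)
      by (apply Rmult_integral_contrapositive; split; [apply pow_nonzero|]; assumption).
    apply Rminus_diag_uniq, (Rmult_eq_reg_l (gamma ^ 2 * delta)); [|exact hscale].
    rewrite defect, H; ring.
Qed.

Lemma pair_set_IFS_invariant (g h : R -> R) (a b : R) :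
  g a = a -> h b = b -> pair_set a b (g b) -> pair_set a b (h a) ->
  IFS_invariant g h (pair_set a b).
Proof.
  intros ga hb gb ha y; unfold setU, image, pair_set; split.
  - intros [-> | ->].
    + left; exists a; auto.
    + right; exists b; auto.
  - intros [[x [[-> | ->] ->]] | [x [[-> | ->] ->]]]; auto.
Qed.

Lemma sum_eq_mul_iff_eq_div (alpha beta : R) :
  beta <> 1 -> alpha + beta = alpha * beta <-> alpha = beta / (beta - 1).
Proof.
  intros hb1; assert (hb1' : beta - 1 <> 0) by lra.
  split; intros H.
  - apply (Rmult_eq_reg_r (beta - 1)); [|exact hb1'].
    unfold Rdiv; rewrite Rmult_assoc, Rinv_l by exact hb1'; lra.
  - rewrite H; field; exact hb1'.
Qed.

Theorem mainTheorem1 (alpha beta : R)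
  (ha : alpha <> 0) (hb : beta <> 0) (hb1 : beta <> 1) (hab : alpha <> beta) :
  let g := logistic alpha in
  let h := logistic beta in
  let xa := (alpha - 1) / alpha in
  let xb := (beta - 1) / beta in
  (h xa = xb /\ g xb = xa /\ IFS_invariant g h (pair_set xa xb))
  <-> alpha = beta / (beta - 1).
Proof.
  intros g h xa xb.
  rewrite <- sum_eq_mul_iff_eq_div by exact hb1.
  pose proof (logistic_maps_fixed_point_iff alpha beta ha hb hab) as h_xa.
  pose proof (logistic_maps_fixed_point_iff beta alpha hb ha (not_eq_sym hab)) as g_xb.
  rewrite Rplus_comm, Rmult_comm in g_xb.
  split.
  - intros [H _]; exact (proj1 h_xa H).
  - intros H.
    apply h_xa in H as hxa; apply g_xb in H as gxb.
    split; [exact hxa|split; [exact gxb|]].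
    apply pair_set_IFS_invariant.
    + exact (logistic_fixed_pointP alpha ha).
    + exact (logistic_fixed_pointP beta hb).
    + left; exact gxb.
    + right; exact hxa.
Qed.
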